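(* Let $\overline{\boldsymbol{Q}},\overline{\boldsymbol{V}}\in\mathcal{O}_d$ represent points $[\overline{\boldsymbol{Q}}],[\overline{\boldsymbol{V}}]$ of the Grassmann manifold $\mathcal{G}_{d,r}$, chosen such that $\overline{\boldsymbol{V}}=\Pi_{\overline{\boldsymbol{Q}}}(\overline{\boldsymbol{V}})$. Define $\Gamma^{+}_{\overline{\boldsymbol{Q}}\to\overline{\boldsymbol{V}}}$ by \[ \Gamma^{+}_{\overline{\boldsymbol{Q}}\to\overline{\boldsymbol{V}}}(\boldsymbol{Q}_i)=\mathrm{Exp}_{\overline{\boldsymbol{V}}}\Big(\Gamma_{\overline{\boldsymbol{Q}}\to\overline{\boldsymbol{V}}}\big(\mathrm{Log}_{\overline{\boldsymbol{Q}}}(\boldsymbol{Q}_i)\big)\Big) \] for $\boldsymbol{Q}_i\in\mathcal{O}_d$. Then \[ \Gamma^{+}_{\overline{\boldsymbol{Q}}\to\overline{\boldsymbol{V}}}(\boldsymbol{Q}_i)\sim \overline{\boldsymbol{V}}\,\overline{\boldsymbol{Q}}^T\boldsymbol{Q}_i , \] and if $\boldsymbol{Q}_i$ is chosen such that $\boldsymbol{Q}_i=\Pi_{\overline{\boldsymbol{Q}}}(\boldsymbol{Q}_i)$, then equality holds: $\Gamma^{+}_{\overline{\boldsymbol{Q}}\to\overline{\boldsymbol{V}}}(\boldsymbol{Q}_i)=\overline{\boldsymbol{V}}\,\overline{\boldsymbol{Q}}^T\boldsymbol{Q}_i$.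
   Context: $\mathcal{O}_d$ is the set of $d\times d$ orthogonal matrices and $0<r<d$. For $\boldsymbol{Q}\in\mathcal{O}_d$, $[\boldsymbol{Q}]=\{\boldsymbol{Q}\,\mathrm{diag}(\boldsymbol{Q}_r,\boldsymbol{Q}_{d-r}):\boldsymbol{Q}_r\in\mathcal{O}_r,\boldsymbol{Q}_{d-r}\in\mathcal{O}_{d-r}\}$, i.e. the class of orthogonal matrices whose $r$ leftmost columns span the same subspace; $\mathcal{G}_{d,r}=\{[\boldsymbol{Q}]\}$, and $\boldsymbol{Q}_1\sim\boldsymbol{Q}_2$ means $\boldsymbol{Q}_1,\boldsymbol{Q}_2$ lie in the same class. All subspaces considered are assumed to have all principal angles between them strictly smaller than $\pi/2$. For a $(d-r)\times r$ matrix $\boldsymbol{B}$ write $\boldsymbol{B}^{\mathrm{skew}}=\begin{bmatrix}\boldsymbol{0}&-\boldsymbol{B}^T\\ \boldsymbol{B}&\boldsymbol{0}\end{bmatrix}$; tangent vectors at $\boldsymbol{Q}$ are $\boldsymbol{Q}\boldsymbol{B}^{\mathrm{skew}}$. Exponential map: $\mathrm{Exp}_{\boldsymbol{Q}}(\boldsymbol{Q}\boldsymbol{B}^{\mathrm{skew}})=\boldsymbol{Q}\exp(\boldsymbol{B}^{\mathrm{skew}})$ (matrix exponential). Logarithmic map: write $\boldsymbol{Q}=[\boldsymbol{G}\ \boldsymbol{G}_\perp]$, $\boldsymbol{Q}_0=[\boldsymbol{G}_0\ \boldsymbol{G}_{0,\perp}]$ with $\boldsymbol{G},\boldsymbol{G}_0\in\mathbb{R}^{d\times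 r}$; take a compact SVD $(\boldsymbol{I}-\boldsymbol{G}\boldsymbol{G}^T)\boldsymbol{G}_0(\boldsymbol{G}^T\boldsymbol{G}_0)^{-1}=\boldsymbol{U}\boldsymbol{\Sigma}\boldsymbol{V}^T$, let $\boldsymbol{B}_0$ be defined by $\boldsymbol{G}_\perp\boldsymbol{B}_0=\boldsymbol{U}\arctan(\boldsymbol{\Sigma})\boldsymbol{V}^T$, and set $\mathrm{Log}_{\boldsymbol{Q}}(\boldsymbol{Q}_0)=\boldsymbol{Q}\boldsymbol{B}_0^{\mathrm{skew}}$. The projection is $\Pi_{\boldsymbol{Q}_1}(\boldsymbol{Q}_2)=\mathrm{Exp}_{\boldsymbol{Q}_1}(\mathrm{Log}_{\boldsymbol{Q}_1}(\boldsymbol{Q}_2))$, the representative of $[\boldsymbol{Q}_2]$ closest to $\boldsymbol{Q}_1$. Parallel transport: if $\widetilde{\boldsymbol{Q}}=\boldsymbol{Q}\exp(\widetilde{\boldsymbol{B}}^{\mathrm{skew}})$, then parallel transport along this geodesic of the tangent vector $\boldsymbol{Q}\boldsymbol{B}^{\mathrm{skew}}$ is $\Gamma_{\boldsymbol{Q}\to\widetilde{\boldsymbol{Q}}}(\boldsymbol{Q}\boldsymbol{B}^{\mathrm{skew}})=\widetilde{\boldsymbol{Q}}\boldsymbol{B}^{\mathrm{skew}}$. In the paper the notation $\Gamma_{\overline{\boldsymbol{Q}}\to\overline{\boldsymbol{V}}}(\boldsymbol{Q}_i)$ applied to a point is used for the matrix $\overline{\boldsymbol{V}}\,\overline{\boldsymbol{Q}}^T\boldsymbol{Q}_i$.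 *)

From HB Require Import structures.
From mathcomp Require Import all_boot all_order all_algebra.
From mathcomp Require Import all_classical all_reals all_analysis.
Set Implicit Arguments. Unset Strict Implicit. Unset Printing Implicit Defensive.
Import Order.TTheory GRing.Theory Num.Theory numFieldNormedType.Exports.
Local Open Scope ring_scope.

Section Grassmann.
Variable R : realType.
Variables r s : nat.
Local Notation d := (r + s)%N.

Definition orthogonal_mx n (Q : 'M[R]_n) : Prop :=
  Q^T *m Q = 1%:M /\ Q *m Q^T = 1%:M.

Definition mexp n (A : 'M[R]_n) : 'M[R]_n :=
  \matrix_(i, j) limn (fun N : nat => ((\sum_(k < N) (k`!%:R)^-1 *: A ^+ k) i j : R)).

Definition skewB (B : 'M[R]_(s, r)) : 'M[R]_d :=
  block_mx 0 (- B^T) B 0.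

Definition grass_equiv (Q1 Q2 : 'M[R]_d) : Prop :=
  exists (Qr : 'M[R]_r) (Qs : 'M[R]_s),
    orthogonal_mx Qr /\ orthogonal_mx Qs /\ Q2 = Q1 *m block_mx Qr 0 0 Qs.

Definition Gpart (Q : 'M[R]_d) : 'M[R]_(d, r) := lsubmx Q.
Definition Gperp (Q : 'M[R]_d) : 'M[R]_(d, s) := rsubmx Q.

Definition compact_svd m n k (M : 'M[R]_(m, n)) (U : 'M[R]_(m, k))
    (sg : 'rV[R]_k) (V : 'M[R]_(n, k)) : Prop :=
  U^T *m U = 1%:M /\ V^T *m V = 1%:M /\ (forall i, 0 < sg 0 i) /\
  M = U *m diag_mx sg *m V^T.

(* B0 is the matrix defining Log_Q(Q0) = Q B0^skew *)
Definition LogRel (Q Q0 : 'M[R]_d) (B0 : 'M[R]_(s, r)) : Prop :=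
  let G := Gpart Q in let G0 := Gpart Q0 in
  let M := (1%:M - G *m G^T) *m G0 *m invmx (G^T *m G0) in
  exists (k : nat) (U : 'M[R]_(d, k)) (sg : 'rV[R]_k) (V : 'M[R]_(r, k)),
    compact_svd M U sg V /\
    Gperp Q *m B0 = U *m diag_mx (map_mx atan sg) *m V^T.

(* all principal angles between span(G1), span(G2) < pi/2 *)
Definition angles_lt_pi2 (Q1 Q2 : 'M[R]_d) : Prop :=
  (Gpart Q1)^T *m Gpart Q2 \in unitmx.

End Grassmann.

(* Write Qbar = [G H] and Qi = [G0 H0].  The SVD data of Log_Qbar(Qi) factor
   B0 as W diag(theta) V^T with theta = atan(sigma), where V and W := H^T U have
   orthonormal columns.  So B0^skew is conjugate, through the frame
   P = diag(V, W), to a direct sum of plane-rotation generators, and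
   exp(B0^skew) = I - P P^T + P Rot(theta) P^T is orthogonal.  Since
   sin (atan x) = x cos (atan x), the first r columns of exp(B0^skew) lie in the
   column span of Qbar^T G0, which is orthogonal to Qbar^T H0; hence
   exp(B0^skew)^T Qbar^T Qi is block diagonal, i.e. exp(B0^skew) ~ Qbar^T Qi.
   Left multiplication by Vbar preserves ~, so nothing about Vbar is needed;
   the equality case is just Qbar^T Qbar = I. *)

From mathcomp Require Import all_boot all_order all_algebra.
From mathcomp Require Import all_classical all_reals all_analysis.
From mathcomp Require Import ring.
Set Implicit Arguments. Unset Strict Implicit. Unset Printing Implicit Defensive.
Import GRing.Theory Num.Theory numFieldNormedType.Exports.
Local Open Scope classical_set_scope.
Local Open Scope ring_scope.

Section EntrywiseConvergence.
Variable R : realType.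

Definition mx_cvgn m n (u : nat -> 'M[R]_(m, n)) (L : 'M[R]_(m, n)) : Prop :=
  forall i j, (fun N => u N i j) @ \oo --> L i j.

Definition mexp_partial n (A : 'M[R]_n) (N : nat) : 'M[R]_n :=
  \sum_(k < N) (k`!%:R)^-1 *: A ^+ k.

Lemma mexpE n (A L : 'M[R]_n) : mx_cvgn (mexp_partial A) L -> mexp A = L.
Proof.
by move=> AL; apply/matrixP => i j; rewrite mxE; exact: cvg_lim (AL i j).
Qed.

Lemma mx_cvgn_shiftS m n (u : nat -> 'M[R]_(m, n)) L :
  mx_cvgn (fun N => u N.+1) L <-> mx_cvgn u L.
Proof.
by split=> uL i j; have := uL i j; rewrite (cvg_shiftS (fun N => u N i j)).
Qed.

Lemma mx_cvgn_cst m n (L : 'M[R]_(m, n)) : mx_cvgn (fun=> L) L.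
Proof. by move=> i j; exact: cvg_cst. Qed.

Lemma mx_cvgnN m n (u : nat -> 'M[R]_(m, n)) L :
  mx_cvgn u L -> mx_cvgn (fun N => - u N) (- L).
Proof.
by move=> uL i j; rewrite mxE; under eq_cvg do rewrite mxE; exact: cvgN.
Qed.

Lemma mx_cvgnD m n (u v : nat -> 'M[R]_(m, n)) L M :
  mx_cvgn u L -> mx_cvgn v M -> mx_cvgn (fun N => u N + v N) (L + M).
Proof.
by move=> uL vM i j; rewrite mxE; under eq_cvg do rewrite mxE; exact: cvgD.
Qed.

Lemma mx_cvgn_mull p m n (P : 'M[R]_(p, m)) (u : nat -> 'M[R]_(m, n)) L :
  mx_cvgn u L -> mx_cvgn (fun N => P *m u N) (P *m L).
Proof.
move=> uL i j; rewrite mxE; under eq_cvg do rewrite mxE.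
by apply: (cvg_big add_continuous) => a _; apply: cvgM; [exact: cvg_cst|].
Qed.

Lemma mx_cvgn_mulr m n p (u : nat -> 'M[R]_(m, n)) L (Q : 'M[R]_(n, p)) :
  mx_cvgn u L -> mx_cvgn (fun N => u N *m Q) (L *m Q).
Proof.
move=> uL i j; rewrite mxE; under eq_cvg do rewrite mxE.
by apply: (cvg_big add_continuous) => a _; apply: cvgM; [|exact: cvg_cst].
Qed.

Lemma mx_cvgn_diag n (u : nat -> 'rV[R]_n) L :
  mx_cvgn u L -> mx_cvgn (fun N => diag_mx (u N)) (diag_mx L).
Proof.
move=> uL i j; rewrite mxE; under eq_cvg do rewrite mxE.
by case: eqP => _; [exact: uL | exact: cvg_cst].
Qed.

Lemma mx_cvgn_block m1 m2 n1 n2 (a : nat -> 'M[R]_(m1, n1)) (b : nat -> 'M[R]_(m1, n2))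
    (c : nat -> 'M[R]_(m2, n1)) (d : nat -> 'M[R]_(m2, n2)) A B C D :
  mx_cvgn a A -> mx_cvgn b B -> mx_cvgn c C -> mx_cvgn d D ->
  mx_cvgn (fun N => block_mx (a N) (b N) (c N) (d N)) (block_mx A B C D).
Proof.
move=> aA bB cC dD i j; rewrite -(fintype.splitK i) -(fintype.splitK j).
case: (fintype.split i) => {}i; case: (fintype.split j) => {}j /=.
- by rewrite block_mxEul; under eq_cvg do rewrite block_mxEul; exact: aA.
- by rewrite block_mxEur; under eq_cvg do rewrite block_mxEur; exact: bB.
- by rewrite block_mxEdl; under eq_cvg do rewrite block_mxEdl; exact: cC.
- by rewrite block_mxEdr; under eq_cvg do rewrite block_mxEdr; exact: dD.
Qed.

End EntrywiseConvergence.

Section TrigCoefficients.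
Variable R : realType.
Implicit Types x : R.

Lemma nat_double_or_doubleS n : exists m, n = m.*2 \/ n = m.*2.+1.
Proof.
exists n./2; rewrite -[n in n = _]odd_double_half -[n in _ \/ n = _]odd_double_half.
by case: odd; [right|left].
Qed.

Lemma cos_coeffS x n : cos_coeff x n.+1 = - (sin_coeff x n * x) / n.+1%:R.
Proof.
rewrite /cos_coeff /sin_coeff /= factS natrM invfM.
have [m [->|->]] := nat_double_or_doubleS n; rewrite /= odd_double /=.
  by rewrite !mul0r oppr0 mul0r.
by rewrite doubleK -!exprnP !exprS; ring.
Qed.

Lemma sin_coeffS x n : sin_coeff x n.+1 = cos_coeff x n * x / n.+1%:R.
Proof.
rewrite /cos_coeff /sin_coeff /= factS natrM invfM.
have [m [->|->]] := nat_double_or_doubleS n; rewrite /= odd_double /=.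
  by rewrite doubleK -!exprnP !exprS; ring.
by rewrite !mul0r.
Qed.

Lemma cvg_series_cos_coeff x : series (cos_coeff x) @ \oo --> cos x.
Proof. by rewrite cos.unlock; exact: is_cvg_series_cos_coeff. Qed.

Lemma cvg_series_sin_coeff x : series (sin_coeff x) @ \oo --> sin x.
Proof. by rewrite sin.unlock; exact: is_cvg_series_sin_coeff. Qed.

Lemma sin_atan x : sin (atan x) = x * cos (atan x).
Proof.
have cos_neq0 : cos (atan x) != 0.
  by apply/lt0r_neq0/cos_gt0_pihalf; rewrite atan_gtNpi2 atan_ltpi2.
by rewrite -{2}(atanK x) /tan divfK.
Qed.

End TrigCoefficients.

Section PlaneRotations.
Variables (R : realType) (k : nat).
Implicit Types c sn th : 'rV[R]_k.

(* [rot_mx c sn] acts as the diagonal matrix of complex numbers [c + i sn]. *)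
Definition rot_mx c sn : 'M[R]_(k + k) :=
  block_mx (diag_mx c) (- diag_mx sn) (diag_mx sn) (diag_mx c).

Lemma rot_mx1 : rot_mx (const_mx 1) 0 = 1%:M.
Proof. by rewrite /rot_mx linear0 oppr0 diag_const_mx -scalar_mx_block. Qed.

Lemma rot_mxD c1 s1 c2 s2 :
  rot_mx (c1 + c2) (s1 + s2) = rot_mx c1 s1 + rot_mx c2 s2.
Proof. by rewrite /rot_mx add_block_mx !linearD. Qed.

Lemma rot_mxZ a c sn : a *: rot_mx c sn = rot_mx (a *: c) (a *: sn).
Proof. by rewrite /rot_mx scale_block_mx !linearZ /= scalerN. Qed.

Lemma rot_mx_sum (I : Type) (r : seq I) (P : pred I) (c sn : I -> 'rV[R]_k) :
  \sum_(i <- r | P i) rot_mx (c i) (sn i) =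
  rot_mx (\sum_(i <- r | P i) c i) (\sum_(i <- r | P i) sn i).
Proof.
elim/big_rec3: _ => [|i M c' s' _ ->]; last by rewrite rot_mxD.
by rewrite /rot_mx linear0 oppr0 block_mx0.
Qed.

Lemma tr_rot_mx c sn : (rot_mx c sn)^T = rot_mx c (- sn).
Proof. by rewrite /rot_mx tr_block_mx linearN /= !tr_diag_mx linearN opprK. Qed.

Lemma rot_mx_mul c1 s1 c2 s2 :
  rot_mx c1 s1 *m rot_mx c2 s2 =
  rot_mx (\row_l (c1 0 l * c2 0 l - s1 0 l * s2 0 l))
         (\row_l (c1 0 l * s2 0 l + s1 0 l * c2 0 l)).
Proof.
rewrite /rot_mx mulmx_block !mulmxN !mulNmx !mulmx_diag.
by congr block_mx; apply/matrixP => i j; rewrite !mxE;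
  case: eqP => _; rewrite ?mulr1n ?mulr0n; ring.
Qed.

Lemma rot_mx_cos_sin_orthogonal th :
  orthogonal_mx (rot_mx (map_mx cos th) (map_mx sin th)).
Proof.
suff RtR : (rot_mx (map_mx cos th) (map_mx sin th))^T *m
    rot_mx (map_mx cos th) (map_mx sin th) = 1%:M by split; last exact: mulmx1C.
rewrite tr_rot_mx rot_mx_mul -rot_mx1; congr rot_mx; apply/rowP => l; rewrite !mxE.
  by rewrite mulNr opprK -!expr2 cos2Dsin2.
by rewrite mulNr mulrC subrr.
Qed.

Lemma rot_mx_exp_coeff th n :
  (n`!%:R)^-1 *: rot_mx 0 th ^+ n =
  rot_mx (\row_l cos_coeff (th 0 l) n) (\row_l sin_coeff (th 0 l) n).
Proof.
elim: n => [|n IH].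
  rewrite invr1 scale1r expr0 -idmxE -rot_mx1.
  by congr rot_mx; apply/rowP => l; rewrite !mxE /cos_coeff /sin_coeff /=;
    rewrite ?expr0 ?mul1r ?invr1 ?mul0r.
rewrite exprSr factS natrM invfM -scalerA -mulmxE scalemxAl IH rot_mx_mul rot_mxZ.
by congr rot_mx; apply/rowP => l; rewrite !mxE (cos_coeffS, sin_coeffS); ring.
Qed.

Lemma mexp_partial_rot_mx th :
  mexp_partial (rot_mx 0 th) =
  fun N => rot_mx (\row_l series (cos_coeff (th 0 l)) N)
                  (\row_l series (sin_coeff (th 0 l)) N).
Proof.
apply/funext => N; rewrite /mexp_partial.
under eq_bigr do rewrite rot_mx_exp_coeff.
by rewrite rot_mx_sum; congr rot_mx; apply/rowP => l;
  rewrite summxE mxE /series /= big_mkord; apply: eq_bigr => n _; rewrite mxE.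
Qed.

Lemma mexp_rot_mx_cvg th :
  mx_cvgn (mexp_partial (rot_mx 0 th)) (rot_mx (map_mx cos th) (map_mx sin th)).
Proof.
have row_cvg (a : R -> nat -> R) (f : R -> R) :
    (forall x, series (a x) @ \oo --> f x) ->
    mx_cvgn (fun N => \row_l series (a (th 0 l)) N) (map_mx f th).
  by move=> af i l; rewrite (ord1 i) !mxE; under eq_cvg do rewrite mxE; exact: af.
have cos_cvg := row_cvg _ _ (@cvg_series_cos_coeff R).
have sin_cvg := row_cvg _ _ (@cvg_series_sin_coeff R).
rewrite mexp_partial_rot_mx /rot_mx.
by apply: mx_cvgn_block; try apply: mx_cvgnN; apply: mx_cvgn_diag.
Qed.

End PlaneRotations.

Section OrthonormalExtension.
Variables (R : realType) (n m : nat) (P : 'M[R]_(n, m)).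
Hypothesis PtP : P^T *m P = 1%:M.

Definition extend_mx (Y : 'M[R]_m) : 'M[R]_n := 1%:M - P *m P^T + P *m Y *m P^T.

Lemma extend_mx1 : extend_mx 1%:M = 1%:M.
Proof. by rewrite /extend_mx mulmx1 subrK. Qed.

Lemma tr_extend_mx Y : (extend_mx Y)^T = extend_mx Y^T.
Proof. by rewrite /extend_mx !linearD linearN /= trmx1 !trmx_mul trmxK mulmxA. Qed.

Lemma mulmx_tr_extend Y : P^T *m extend_mx Y = Y *m P^T.
Proof.
by rewrite /extend_mx mulmxDr mulmxBr mulmx1 !mulmxA PtP !mul1mx subrr add0r.
Qed.

Lemma extend_mxM Y Z : extend_mx Y *m extend_mx Z = extend_mx (Y *m Z).
Proof.
rewrite /extend_mx; set Q := 1%:M - P *m P^T.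
have QP : Q *m P = 0 by rewrite mulmxBl mul1mx -mulmxA PtP mulmx1 subrr.
have PtQ : P^T *m Q = 0 by rewrite mulmxBr mulmx1 mulmxA PtP mul1mx subrr.
have QQ : Q *m Q = Q by rewrite {1}/Q mulmxBl mul1mx -mulmxA PtQ mulmx0 subr0.
clearbody Q; rewrite mulmxDl !mulmxDr QQ !mulmxA QP !mul0mx addr0.
by rewrite -(mulmxA _ P^T Q) PtQ mulmx0 add0r -(mulmxA _ P^T P) PtP mulmx1.
Qed.

Lemma extend_mx_orthogonal K : orthogonal_mx K -> orthogonal_mx (extend_mx K).
Proof.
by case=> KtK KKt; split; rewrite tr_extend_mx extend_mxM ?KtK ?KKt extend_mx1.
Qed.

Lemma conj_mx_exprS (A : 'M[R]_m) i :
  (P *m A *m P^T) ^+ i.+1 = P *m A ^+ i.+1 *m P^T.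
Proof.
elim: i => [|i IH]; first by rewrite !expr1.
rewrite exprS IH [in RHS]exprS -!mulmxE !mulmxA.
by rewrite -(mulmxA _ P^T P) PtP mulmx1.
Qed.

Lemma mexp_partial_conj (A : 'M[R]_m) N :
  mexp_partial (P *m A *m P^T) N.+1 = extend_mx (mexp_partial A N.+1).
Proof.
rewrite /mexp_partial /extend_mx !big_ord_recl /= fact0 !expr0 invr1 !scale1r.
rewrite -!idmxE mulmxDr mulmxDl mulmx1 addrA subrK mulmx_sumr mulmx_suml.
congr (_ + _); apply: eq_bigr => i _.
by rewrite /bump leq0n /= add1n conj_mx_exprS -scalemxAr -scalemxAl.
Qed.

Lemma mx_cvgn_extend (u : nat -> 'M[R]_m) L :
  mx_cvgn u L -> mx_cvgn (fun N => extend_mx (u N)) (extend_mx L).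
Proof.
move=> uL; apply: mx_cvgnD; first exact: mx_cvgn_cst.
exact/mx_cvgn_mulr/mx_cvgn_mull.
Qed.

Lemma mexp_conj (A L : 'M[R]_m) :
  mx_cvgn (mexp_partial A) L -> mexp (P *m A *m P^T) = extend_mx L.
Proof.
move=> AL; apply/mexpE/mx_cvgn_shiftS => i j.
under eq_cvg do rewrite mexp_partial_conj.
exact/mx_cvgn_extend/mx_cvgn_shiftS.
Qed.

End OrthonormalExtension.

Section SkewFactorization.
Variables (R : realType) (r s k : nat) (V : 'M[R]_(r, k)) (W : 'M[R]_(s, k)).
Hypotheses (VtV : V^T *m V = 1%:M) (WtW : W^T *m W = 1%:M).

Definition frame_mx : 'M[R]_(r + s, k + k) := block_mx V 0 0 W.

Lemma frame_mx_orthonormal : frame_mx^T *m frame_mx = 1%:M.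
Proof.
rewrite /frame_mx tr_block_mx !trmx0 mulmx_block !mulmx0 !mul0mx !addr0 !add0r.
by rewrite VtV WtW -scalar_mx_block.
Qed.

Lemma skewB_factor th :
  skewB (W *m diag_mx th *m V^T) = frame_mx *m rot_mx 0 th *m frame_mx^T.
Proof.
rewrite /skewB /frame_mx /rot_mx linear0 tr_block_mx !trmx0 !mulmx_block.
rewrite !mulmx0 !mul0mx !addr0 !add0r.
by rewrite !mul0mx !trmx_mul trmxK tr_diag_mx mulmxN mulNmx mulmxA.
Qed.

Lemma mexp_skewB_factor th :
  mexp (skewB (W *m diag_mx th *m V^T)) =
  extend_mx frame_mx (rot_mx (map_mx cos th) (map_mx sin th)).
Proof.
by rewrite skewB_factor; apply: mexp_conj;
  [exact: frame_mx_orthonormal | exact: mexp_rot_mx_cvg].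
Qed.

Lemma lsubmx_mexp_skewB_factor th :
  lsubmx (mexp (skewB (W *m diag_mx th *m V^T))) =
  col_mx (extend_mx V (diag_mx (map_mx cos th)))
         (W *m diag_mx (map_mx sin th) *m V^T).
Proof.
rewrite mexp_skewB_factor /extend_mx /frame_mx /rot_mx tr_block_mx !trmx0.
rewrite !mulmx_block !mulmx0 !mul0mx !addr0 !add0r (scalar_mx_block r s).
rewrite opp_block_mx !add_block_mx !oppr0 !addr0 !add0r.
by rewrite block_mxEh row_mxKl.
Qed.

End SkewFactorization.

Section GrassmannEquivalence.
Variables (R : realType) (r s : nat).
Implicit Types Q E Z : 'M[R]_(r + s).

Lemma grass_equiv_mull (A Q1 Q2 : 'M[R]_(r + s)) :
  grass_equiv Q1 Q2 -> grass_equiv (A *m Q1) (A *m Q2).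
Proof. by case=> Qr [Qs [oQr [oQs ->]]]; exists Qr, Qs; rewrite mulmxA. Qed.

Lemma orthogonal_mx_Gpart Q : orthogonal_mx Q ->
  [/\ (Gpart Q)^T *m Gpart Q = 1%:M, (Gpart Q)^T *m Gperp Q = 0,
      (Gperp Q)^T *m Gperp Q = 1%:M &
      Gpart Q *m (Gpart Q)^T + Gperp Q *m (Gperp Q)^T = 1%:M].
Proof.
rewrite /Gpart /Gperp; case; rewrite -{1 2 3 4}(hsubmxK Q) tr_row_mx.
rewrite mul_col_row mul_row_col.
by rewrite (scalar_mx_block r s) => /eq_block_mx [-> -> _ ->] ->.
Qed.

Lemma tr_mulmx_Gpart p Q (M : 'M[R]_(r + s, p)) :
  Q^T *m M = col_mx ((Gpart Q)^T *m M) ((Gperp Q)^T *m M).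
Proof. by rewrite -{1}(hsubmxK Q) tr_row_mx mul_col_mx. Qed.

Lemma orthogonal_block_lower (A : 'M[R]_r) (B : 'M[R]_(r, s)) C (D : 'M[R]_s) :
  (block_mx A B C D)^T *m block_mx A B C D = 1%:M -> B = 0 ->
  [/\ C = 0, orthogonal_mx A & orthogonal_mx D].
Proof.
move=> + B0; rewrite B0 tr_block_mx mulmx_block (scalar_mx_block r s) !trmx0.
rewrite !mulmx0 !mul0mx ?addr0 ?add0r => /eq_block_mx [AtA CtD _ DtD].
have DDt : D *m D^T = 1%:M by exact: mulmx1C.
have C0 : C = 0.
  by apply: trmx_inj; rewrite trmx0 -[C^T]mulmx1 -DDt mulmxA CtD mul0mx.
move: AtA; rewrite C0 trmx0 mul0mx addr0 => AtA.
by split=> //; split=> //; exact: mulmx1C.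
Qed.

Lemma grass_equiv_orthogonal E Z :
  orthogonal_mx E -> Z^T *m Z = 1%:M -> (lsubmx E)^T *m rsubmx Z = 0 ->
  grass_equiv E Z.
Proof.
move=> [EtE EEt] ZtZ upper0.
have EtZ_orth : (E^T *m Z)^T *m (E^T *m Z) = 1%:M.
  by rewrite trmx_mul trmxK mulmxA -(mulmxA Z^T) EEt mulmx1 ZtZ.
have EtZ_block : E^T *m Z = block_mx
    ((lsubmx E)^T *m lsubmx Z) ((lsubmx E)^T *m rsubmx Z)
    ((rsubmx E)^T *m lsubmx Z) ((rsubmx E)^T *m rsubmx Z).
  by rewrite -{1}(hsubmxK E) -{1}(hsubmxK Z) tr_row_mx mul_col_row.
move: EtZ_orth; rewrite EtZ_block => /orthogonal_block_lower /(_ upper0).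
case=> lower0 oA oD.
exists ((lsubmx E)^T *m lsubmx Z), ((rsubmx E)^T *m rsubmx Z); split=> //; split=> //.
by rewrite -upper0 -lower0 -EtZ_block mulmxA EEt mul1mx.
Qed.

End GrassmannEquivalence.

Definition log_arg (R : realType) (r s : nat) (Q Q0 : 'M[R]_(r + s)) :=
  (1%:M - Gpart Q *m (Gpart Q)^T) *m Gpart Q0 *m invmx ((Gpart Q)^T *m Gpart Q0).

Section LogCoordinates.
Variables (R : realType) (r s k : nat) (Q Q0 : 'M[R]_(r + s)).
Variables (U : 'M[R]_(r + s, k)) (sg : 'rV[R]_k) (V : 'M[R]_(r, k)) (B0 : 'M[R]_(s, r)).
Hypotheses (oQ : orthogonal_mx Q) (angQQ0 : angles_lt_pi2 Q Q0).
Hypothesis svd : compact_svd (log_arg Q Q0) U sg V.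
Hypothesis logB0 : Gperp Q *m B0 = U *m diag_mx (map_mx atan sg) *m V^T.

Local Notation G := (Gpart Q).
Local Notation H := (Gperp Q).
Local Notation G0 := (Gpart Q0).
Local Notation W := ((Gperp Q)^T *m U).

Lemma Gpart_tr_U : G^T *m U = 0.
Proof.
have [_ [VtV [sg_gt0 svdE]]] := svd.
have [GtG _ _ _] := orthogonal_mx_Gpart oQ.
have U_eq : U = log_arg Q Q0 *m V *m diag_mx (map_mx GRing.inv sg).
  rewrite svdE -(mulmxA _ V^T V) VtV mulmx1 -mulmxA mulmx_diag.
  rewrite -[LHS]mulmx1 -diag_const_mx.
  by congr (U *m diag_mx _); apply/rowP => l; rewrite !mxE mulfV ?lt0r_neq0 ?sg_gt0.
by rewrite U_eq /log_arg !mulmxA mulmxBr mulmx1 mulmxA GtG mul1mx subrr !mul0mx.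
Qed.

Lemma Gperp_coord : H *m W = U.
Proof.
have [_ _ _ GGHH] := orthogonal_mx_Gpart oQ.
by rewrite mulmxA -[RHS]mul1mx -GGHH mulmxDl -(mulmxA G) Gpart_tr_U mulmx0 add0r.
Qed.

Lemma coord_orthonormal : W^T *m W = 1%:M.
Proof.
by rewrite trmx_mul trmxK -mulmxA Gperp_coord (proj1 svd).
Qed.

Lemma B0_factor : B0 = W *m diag_mx (map_mx atan sg) *m V^T.
Proof.
have [_ _ HtH _] := orthogonal_mx_Gpart oQ.
by rewrite -[B0]mul1mx -HtH -mulmxA logB0 !mulmxA.
Qed.

Lemma Gperp_tr_Gpart0 : H^T *m G0 *m invmx (G^T *m G0) = W *m diag_mx sg *m V^T.
Proof.
have [_ [_ [_ svdE]]] := svd.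
have [_ GtH _ _] := orthogonal_mx_Gpart oQ.
have HtG : H^T *m G = 0 by rewrite -[H^T *m G]trmxK trmx_mul trmxK GtH trmx0.
have := congr1 (mulmx H^T) svdE; rewrite /log_arg !mulmxA.
by rewrite mulmxBr mulmx1 mulmxA HtG mul0mx subr0.
Qed.

Lemma lsubmx_mexp_skew_log :
  lsubmx (mexp (skewB B0)) =
  Q^T *m G0 *m (invmx (G^T *m G0) *m
    extend_mx V (diag_mx (map_mx cos (map_mx atan sg)))).
Proof.
have [_ [VtV _]] := svd.
rewrite B0_factor lsubmx_mexp_skewB_factor //; last exact: coord_orthonormal.
rewrite (tr_mulmx_Gpart Q) mul_col_mx mulmxA mulmxV // mul1mx.
congr col_mx.
rewrite mulmxA Gperp_tr_Gpart0 -(mulmxA _ V^T) (mulmx_tr_extend VtV) mulmxA.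
rewrite -(mulmxA W (diag_mx sg)) mulmx_diag.
by congr (W *m diag_mx _ *m V^T); apply/rowP => l; rewrite !mxE sin_atan mulrC.
Qed.

Lemma mexp_skew_log_equiv : orthogonal_mx Q0 ->
  grass_equiv (mexp (skewB B0)) (Q^T *m Q0).
Proof.
move=> oQ0; have [_ [VtV _]] := svd.
have [_ G0tH0 _ _] := orthogonal_mx_Gpart oQ0.
apply: grass_equiv_orthogonal.
- rewrite B0_factor mexp_skewB_factor //; last exact: coord_orthonormal.
  apply: (extend_mx_orthogonal (frame_mx_orthonormal VtV coord_orthonormal)).
  exact: rot_mx_cos_sin_orthogonal.
- by rewrite trmx_mul trmxK mulmxA -(mulmxA Q0^T) (proj2 oQ) mulmx1 (proj1 oQ0).
rewrite lsubmx_mexp_skew_log -[Q0 in rsubmx (_ *m Q0)]hsubmxK mul_mx_row row_mxKr.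
rewrite !trmx_mul trmxK -!mulmxA (mulmxA Q) (proj2 oQ) mul1mx G0tH0.
by rewrite !mulmx0.
Qed.

End LogCoordinates.

Theorem mainTheorem2 (R : realType) (r s : nat) (hr : (0 < r)%N) (hs : (0 < s)%N)
  (Qbar Vbar Qi : 'M[R]_(r + s)) :
  orthogonal_mx Qbar -> orthogonal_mx Vbar -> orthogonal_mx Qi ->
  angles_lt_pi2 Qbar Vbar -> angles_lt_pi2 Qbar Qi ->
  (* Vbar = Pi_Qbar(Vbar) = Exp_Qbar(Log_Qbar(Vbar)) *)
  (exists Bt : 'M[R]_(s, r), LogRel Qbar Vbar Bt /\ Vbar = Qbar *m mexp (skewB Bt)) ->
  forall B0 : 'M[R]_(s, r), LogRel Qbar Qi B0 ->
  (* Gamma^+(Qi) = Exp_Vbar(Gamma(Qbar B0^skew)) = Vbar exp(B0^skew) *)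
  grass_equiv (Vbar *m mexp (skewB B0)) (Vbar *m Qbar^T *m Qi) /\
  (Qi = Qbar *m mexp (skewB B0) ->
     Vbar *m mexp (skewB B0) = Vbar *m Qbar^T *m Qi).
Proof.
move=> oQbar _ oQi _ angQi _ B0 [k [U [sg [V [svd logB0]]]]].
split=> [|->]; last by rewrite !mulmxA -(mulmxA Vbar) (proj1 oQbar) mulmx1.
rewrite -mulmxA; apply: grass_equiv_mull.
exact: mexp_skew_log_equiv oQbar angQi svd logB0 oQi.
Qed.
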